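(* Consider the GBDF5 coefficients $a_0=\tfrac{5\beta^4+40\beta^3+105\beta^2+100\beta+24}{120}$, $a_1=\tfrac{-10\beta^4-70\beta^3-135\beta^2-25\beta+77}{60}$, $a_2=\tfrac{15\beta^4+90\beta^3+120\beta^2-45\beta-43}{60}$, $a_3=\tfrac{-10\beta^4-50\beta^3-45\beta^2+25\beta+17}{60}$, $a_4=\tfrac{5\beta^4+20\beta^3+15\beta^2-10\beta-6}{120}$; $b_0=\tfrac{\beta(\beta^3+6\beta^2+11\beta+6)}{24}$, $b_1=\tfrac{-\beta^4-5\beta^3-5\beta^2+5\beta+6}{6}$, $b_2=\tfrac{\beta(\beta^3+4\beta^2+\beta-6)}{4}$, $b_3=\tfrac{\beta(-\beta^3-3\beta^2+\beta+3)}{6}$, $b_4=\tfrac{\beta(\beta^3+2\beta^2-\beta-2)}{24}$, $b_5=0$; $c_0=\tfrac{\beta^4+10\beta^3+35\beta^2+50\beta+24}{24}$, $c_1=-\tfrac{\beta(\beta^3+9\beta^2+26\beta+24)}{6}$, $c_2=\tfrac{\beta(\beta^3+8\beta^2+19\beta+12)}{4}$, $c_3=-\tfrac{\beta(\beta^3+7\beta^2+14\beta+8)}{6}$, $c_4=\tfrac{\beta(\beta^3+6\beta^2+11\beta+6)}{24}$. For $\beta\ge1$, $$\sigma_{\mathrm{F}}\ge1,\quad\sigma_{\mathrm{E}}\ge\frac{5(2\beta^4+16\beta^3+40\beta^2+32\beta+3)}{10\beta^4+60\beta^3+90\beta^2-32},\quad\lambda_{\mathrm{I}}\le\frac{5(2\beta^4+8\beta^3+4\beta^2-8\beta-3)}{10\beta^4+60\beta^3+90\beta^2-32},$$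 so that $\mathfrak{I}_{\mathrm{IE}}\le\dfrac{2\beta^4+8\beta^3+4\beta^2-8\beta-3}{2\beta^4+16\beta^3+40\beta^2+32\beta+3}$. If $\beta=20$, then $\sigma_{\mathrm{F}}\le\frac{399}{200}$, $\sigma_{\mathrm{E}}\le\frac{2501825}{2115968}$, $\lambda_{\mathrm{I}}\ge\frac{1769085}{2115968}$, so that $\mathfrak{I}_{\mathrm{IE}}\ge\frac{353817}{500365}$.
   Context: For coefficient vectors $(a_j)_{j=0}^{\mathrm{k}-1}$, $(b_j)_{j=0}^{\mathrm{k}}$, $(c_j)_{j=0}^{\mathrm{k}-1}$ define $a(\theta)=\sum_j a_je^{\imath j\theta}$, $b(\theta)=\sum_j b_je^{\imath j\theta}$, $c(\theta)=\sum_jc_je^{\imath j\theta}$ and $\sigma_{\mathrm{F}}=\max_{\theta\in[0,2\pi)}|1/a(\theta)|$, $\sigma_{\mathrm{E}}=\max_{\theta\in[0,2\pi)}|c(\theta)/a(\theta)|$, $\lambda_{\mathrm{I}}=\min_{\theta\in[0,2\pi)}\Re[b(\theta)/a(\theta)]$, $\mathfrak{I}_{\mathrm{IE}}=\lambda_{\mathrm{I}}/\sigma_{\mathrm{E}}$. Here $\mathrm{k}=5$. *)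

From Stdlib Require Import Reals Lra List.
From Coquelicot Require Import Coquelicot.
Import ListNotations.
Open Scope R_scope.

Definition expi (x : R) : C := (cos x, sin x).

Fixpoint tpoly_from (cs : list R) (j : nat) (theta : R) : C :=
  match cs with
  | nil => RtoC 0
  | x :: cs' => Cplus (Cmult (RtoC x) (expi (INR j * theta))) (tpoly_from cs' (S j) theta)
  end.

Definition tpoly (cs : list R) (theta : R) : C := tpoly_from cs 0 theta.

Definition gbdf5_a (B : R) : list R :=
  [ (5*B^4+40*B^3+105*B^2+100*B+24)/120;
    (-10*B^4-70*B^3-135*B^2-25*B+77)/60;
    (15*B^4+90*B^3+120*B^2-45*B-43)/60;
    (-10*B^4-50*B^3-45*B^2+25*B+17)/60;
    (5*B^4+20*B^3+15*B^2-10*B-6)/120 ].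

Definition gbdf5_b (B : R) : list R :=
  [ B*(B^3+6*B^2+11*B+6)/24;
    (-B^4-5*B^3-5*B^2+5*B+6)/6;
    B*(B^3+4*B^2+B-6)/4;
    B*(-B^3-3*B^2+B+3)/6;
    B*(B^3+2*B^2-B-2)/24;
    0 ].

Definition gbdf5_c (B : R) : list R :=
  [ (B^4+10*B^3+35*B^2+50*B+24)/24;
    -(B*(B^3+9*B^2+26*B+24)/6);
    B*(B^3+8*B^2+19*B+12)/4;
    -(B*(B^3+7*B^2+14*B+8)/6);
    B*(B^3+6*B^2+11*B+6)/24 ].

Definition IsMaxOnCircle (f : R -> R) (m : R) : Prop :=
  (exists theta, 0 <= theta < 2 * PI /\ f theta = m) /\
  (forall theta, 0 <= theta < 2 * PI -> f theta <= m).

Definition IsMinOnCircle (f : R -> R) (m : R) : Prop :=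
  (exists theta, 0 <= theta < 2 * PI /\ f theta = m) /\
  (forall theta, 0 <= theta < 2 * PI -> m <= f theta).

Definition IsSigmaF (B sF : R) : Prop :=
  IsMaxOnCircle (fun t => Cmod (Cinv (tpoly (gbdf5_a B) t))) sF.
Definition IsSigmaE (B sE : R) : Prop :=
  IsMaxOnCircle (fun t => Cmod (Cdiv (tpoly (gbdf5_c B) t) (tpoly (gbdf5_a B) t))) sE.
Definition IsLambdaI (B lI : R) : Prop :=
  IsMinOnCircle (fun t => Re (Cdiv (tpoly (gbdf5_b B) t) (tpoly (gbdf5_a B) t))) lI.

From Stdlib Require Import Reals Lra Psatz List.
From Coquelicot Require Import Coquelicot.
Open Scope R_scope.

(* With c = cos θ, the identities cos jθ = T_j(c) and sin jθ = sin θ U_(j-1)(c) turn |p(θ)|^2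
   and Re(p(θ) conj q(θ)) into polynomials in c, so sigma_F, sigma_E and lambda_I are extrema over
   c in [-1, 1] of explicit continuous functions, and they are attained.
   In w = 1 - c one finds |a|^2 = 1 + w/6 + 2w^2/45 - k3 w^3 + k4 w^4, and a quartic
   a0 - k3 w^3 + k4 w^4 with k4 > 0 is positive as soon as 27 k3^4 < 256 k4^3 a0 (a sum of squares
   certificate). For β >= 1 this holds with a0 = 1, since in u = β - 1 the polynomial
   256 k4^3 - 27 k3^4 has only positive coefficients; hence a has no zero on the circle.
   The bounds for general β are the values at θ = 0 and θ = π. For β = 20 each bound is again a
   quartic inequality in w decided by the same criterion. *)

Lemma sin_sqr_cos t : sin t ^ 2 = 1 - cos t ^ 2.
Proof. pose proof (sin2_cos2 t). unfold Rsqr in *. lra. Qed.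

(* [cheb n c] is the pair (T_n(c), U_(n-1)(c)) of Chebyshev polynomials. *)
Fixpoint cheb (n : nat) (c : R) : R * R :=
  match n with
  | O => (1, 0)
  | S m => (fst (cheb m c) * c - (1 - c^2) * snd (cheb m c), snd (cheb m c) * c + fst (cheb m c))
  end.

Lemma cos_sin_mult_cheb n t :
  cos (INR n * t) = fst (cheb n (cos t)) /\ sin (INR n * t) = sin t * snd (cheb n (cos t)).
Proof.
  induction n as [|n [IHc IHs]].
  - simpl. rewrite Rmult_0_l, cos_0, sin_0. split; ring.
  - rewrite S_INR, Rmult_plus_distr_r, Rmult_1_l, cos_plus, sin_plus, IHc, IHs; cbn [cheb fst snd].
    rewrite <- sin_sqr_cos. split; ring.
Qed.

Fixpoint cheb_re (cs : list R) (j : nat) (c : R) : R :=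
  match cs with nil => 0 | x :: cs' => x * fst (cheb j c) + cheb_re cs' (S j) c end.

Fixpoint cheb_im (cs : list R) (j : nat) (c : R) : R :=
  match cs with nil => 0 | x :: cs' => x * snd (cheb j c) + cheb_im cs' (S j) c end.

Lemma tpoly_from_cheb cs j t :
  tpoly_from cs j t = (cheb_re cs j (cos t), sin t * cheb_im cs j (cos t)).
Proof.
  revert j; induction cs as [|x cs IH]; intro j; simpl.
  - unfold RtoC. f_equal; ring.
  - destruct (cos_sin_mult_cheb j t) as [Hc Hs].
    rewrite IH. unfold expi, Cplus, Cmult, RtoC; simpl. rewrite Hc, Hs. f_equal; ring.
Qed.

Definition sqnorm (cs : list R) (c : R) : R :=
  cheb_re cs 0 c ^ 2 + (1 - c ^ 2) * cheb_im cs 0 c ^ 2.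

Definition redot (cs ds : list R) (c : R) : R :=
  cheb_re cs 0 c * cheb_re ds 0 c + (1 - c ^ 2) * (cheb_im cs 0 c * cheb_im ds 0 c).

Lemma Cmod_tpoly cs t : Cmod (tpoly cs t) = sqrt (sqnorm cs (cos t)).
Proof.
  unfold Cmod, tpoly, sqnorm. rewrite tpoly_from_cheb; cbn [fst snd].
  f_equal. rewrite Rpow_mult_distr, sin_sqr_cos. ring.
Qed.

Lemma tpoly_neq0 cs t : 0 < sqnorm cs (cos t) -> tpoly cs t <> 0%C.
Proof.
  intros Hpos H0. apply (sqrt_lt_R0 _) in Hpos.
  rewrite <- Cmod_tpoly, H0, Cmod_0 in Hpos. lra.
Qed.

Lemma Re_tpoly_div cs ds t : 0 < sqnorm ds (cos t) ->
  Re (Cdiv (tpoly cs t) (tpoly ds t)) = redot cs ds (cos t) / sqnorm ds (cos t).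
Proof.
  intros Hpos. unfold sqnorm, redot in *. unfold tpoly in *.
  rewrite !tpoly_from_cheb. unfold Cdiv, Cmult, Cinv, Re; cbn [fst snd].
  rewrite <- sin_sqr_cos in *. field.
  rewrite <- (Rpow_mult_distr (sin t)) in Hpos. lra.
Qed.

Lemma continuous_cheb n :
  continuity (fun c => fst (cheb n c)) /\ continuity (fun c => snd (cheb n c)).
Proof.
  assert (Hid : continuity (fun c => c)) by (apply derivable_continuous, derivable_id).
  assert (Hsq : continuity (fun c => 1 - c ^ 2)) by reg.
  induction n as [|n [IHT IHU]]; cbn [cheb fst snd]; split.
  - now apply continuity_const.
  - now apply continuity_const.
  - apply continuity_minus; apply continuity_mult; auto.
  - apply continuity_plus; [apply continuity_mult|]; auto.
Qed.

Lemma continuous_cheb_re_im cs j : continuity (cheb_re cs j) /\ continuity (cheb_im cs j).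
Proof.
  revert j; induction cs as [|x cs IH]; intro j; cbn [cheb_re cheb_im].
  - split; now apply continuity_const.
  - destruct (IH (S j)), (continuous_cheb j).
    split; apply continuity_plus; auto; apply continuity_scal; auto.
Qed.

Lemma continuity_sqr f : continuity f -> continuity (fun x => f x ^ 2).
Proof.
  intros Hf x. apply (continuity_pt_comp f (fun y => y ^ 2)); [apply Hf|].
  apply derivable_continuous_pt, derivable_pt_pow.
Qed.

Lemma continuous_sqnorm cs : continuity (sqnorm cs).
Proof.
  destruct (continuous_cheb_re_im cs 0) as [Hre Him].
  assert (Hw : continuity (fun c => 1 - c ^ 2)) by reg.
  apply continuity_plus; [|apply continuity_mult]; auto using continuity_sqr.
Qed.

Lemma continuous_redot cs ds : continuity (redot cs ds).
Proof.
  destruct (continuous_cheb_re_im cs 0), (continuous_cheb_re_im ds 0).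
  assert (Hw : continuity (fun c => 1 - c ^ 2)) by reg.
  apply continuity_plus; repeat apply continuity_mult; auto.
Qed.

Lemma sqnorm_nonneg cs c : -1 <= c <= 1 -> 0 <= sqnorm cs c.
Proof.
  intros Hc. unfold sqnorm.
  assert (0 <= 1 - c ^ 2) by nra. pose proof (pow2_ge_0 (cheb_re cs 0 c)).
  pose proof (pow2_ge_0 (cheb_im cs 0 c)). nra.
Qed.

Lemma continuity_pt_sqrt_sqnorm cs c : -1 <= c <= 1 -> continuity_pt (fun x => sqrt (sqnorm cs x)) c.
Proof.
  intros Hc. apply (continuity_pt_comp (sqnorm cs) sqrt); [apply continuous_sqnorm|].
  now apply continuity_pt_sqrt, sqnorm_nonneg.
Qed.

Definition IsMaxOnSegment (g : R -> R) (m : R) : Prop :=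
  (exists c, -1 <= c <= 1 /\ g c = m) /\ (forall c, -1 <= c <= 1 -> g c <= m).

Definition IsMinOnSegment (g : R -> R) (m : R) : Prop :=
  (exists c, -1 <= c <= 1 /\ g c = m) /\ (forall c, -1 <= c <= 1 -> m <= g c).

Lemma cos_surjective_circle c : -1 <= c <= 1 -> exists t, 0 <= t < 2 * PI /\ cos t = c.
Proof.
  intros Hc. exists (acos c). pose proof (acos_bound c). pose proof PI_RGT_0.
  split; [lra | now apply cos_acos].
Qed.

Section CosineReduction.

Variables (f g : R -> R).
Hypothesis f_cos : forall t, f t = g (cos t).

Lemma IsMaxOnCircle_cos m : IsMaxOnCircle f m <-> IsMaxOnSegment g m.
Proof.
  split; intros [[x [Hx Hm]] Hle].
  - split.
    + exists (cos x). split; [apply COS_bound | now rewrite <- f_cos].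
    + intros c Hc. destruct (cos_surjective_circle c Hc) as [t [Ht <-]].
      rewrite <- f_cos. now apply Hle.
  - destruct (cos_surjective_circle x Hx) as [t [Ht Hxt]]. split.
    + exists t. split; [exact Ht|]. now rewrite f_cos, Hxt.
    + intros t' Ht'. rewrite f_cos. apply Hle, COS_bound.
Qed.

Lemma IsMinOnCircle_cos m : IsMinOnCircle f m <-> IsMinOnSegment g m.
Proof.
  split; intros [[x [Hx Hm]] Hle].
  - split.
    + exists (cos x). split; [apply COS_bound | now rewrite <- f_cos].
    + intros c Hc. destruct (cos_surjective_circle c Hc) as [t [Ht <-]].
      rewrite <- f_cos. now apply Hle.
  - destruct (cos_surjective_circle x Hx) as [t [Ht Hxt]]. split.
    + exists t. split; [exact Ht|]. now rewrite f_cos, Hxt.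
    + intros t' Ht'. rewrite f_cos. apply Hle, COS_bound.
Qed.

End CosineReduction.

Section SegmentExtrema.

Variable g : R -> R.
Hypothesis g_cont : forall c, -1 <= c <= 1 -> continuity_pt g c.

Lemma IsMaxOnSegment_exists : exists m, IsMaxOnSegment g m.
Proof.
  destruct (continuity_ab_maj g (-1) 1) as [x [Hle Hx]]; [lra | exact g_cont |].
  exists (g x). split; [now exists x | exact Hle].
Qed.

Lemma IsMinOnSegment_exists : exists m, IsMinOnSegment g m.
Proof.
  destruct (continuity_ab_min g (-1) 1) as [x [Hle Hx]]; [lra | exact g_cont |].
  exists (g x). split; [now exists x | exact Hle].
Qed.

End SegmentExtrema.

Section RatiosOnCircle.

Variable a : list R.
Hypothesis a_pos : forall c, -1 <= c <= 1 -> 0 < sqnorm a c.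

Lemma IsMaxOnCircle_Cmod_inv m :
  IsMaxOnCircle (fun t => Cmod (Cinv (tpoly a t))) m <->
  IsMaxOnSegment (fun c => / sqrt (sqnorm a c)) m.
Proof.
  apply IsMaxOnCircle_cos. intros t.
  rewrite Cmod_inv, Cmod_tpoly; [reflexivity | apply tpoly_neq0, a_pos, COS_bound].
Qed.

Lemma IsMaxOnCircle_Cmod_div cs m :
  IsMaxOnCircle (fun t => Cmod (Cdiv (tpoly cs t) (tpoly a t))) m <->
  IsMaxOnSegment (fun c => sqrt (sqnorm cs c) / sqrt (sqnorm a c)) m.
Proof.
  apply IsMaxOnCircle_cos. intros t.
  rewrite Cmod_div, !Cmod_tpoly; [reflexivity | apply tpoly_neq0, a_pos, COS_bound].
Qed.

Lemma IsMinOnCircle_Re_div cs m :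
  IsMinOnCircle (fun t => Re (Cdiv (tpoly cs t) (tpoly a t))) m <->
  IsMinOnSegment (fun c => redot cs a c / sqnorm a c) m.
Proof.
  apply IsMinOnCircle_cos. intros t. apply Re_tpoly_div, a_pos, COS_bound.
Qed.

Lemma sqrt_sqnorm_neq0 c : -1 <= c <= 1 -> sqrt (sqnorm a c) <> 0.
Proof. intros Hc. apply Rgt_not_eq, sqrt_lt_R0, a_pos, Hc. Qed.

Lemma Cmod_inv_max_exists : exists m, IsMaxOnCircle (fun t => Cmod (Cinv (tpoly a t))) m.
Proof.
  destruct (IsMaxOnSegment_exists (fun c => / sqrt (sqnorm a c))) as [m Hm].
  - intros c Hc. apply continuity_pt_inv; [now apply continuity_pt_sqrt_sqnorm | now apply sqrt_sqnorm_neq0].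
  - exists m. now apply IsMaxOnCircle_Cmod_inv.
Qed.

Lemma Cmod_div_max_exists cs : exists m, IsMaxOnCircle (fun t => Cmod (Cdiv (tpoly cs t) (tpoly a t))) m.
Proof.
  destruct (IsMaxOnSegment_exists (fun c => sqrt (sqnorm cs c) / sqrt (sqnorm a c))) as [m Hm].
  - intros c Hc. apply continuity_pt_div; [now apply continuity_pt_sqrt_sqnorm.. | now apply sqrt_sqnorm_neq0].
  - exists m. now apply IsMaxOnCircle_Cmod_div.
Qed.

Lemma Re_div_min_exists cs : exists m, IsMinOnCircle (fun t => Re (Cdiv (tpoly cs t) (tpoly a t))) m.
Proof.
  destruct (IsMinOnSegment_exists (fun c => redot cs a c / sqnorm a c)) as [m Hm].
  - intros c Hc. apply continuity_pt_div; [apply continuous_redot | apply continuous_sqnorm |].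
    apply Rgt_not_eq, a_pos, Hc.
  - exists m. now apply IsMinOnCircle_Re_div.
Qed.

End RatiosOnCircle.

Lemma quartic_pos a0 a3 a4 w : 27 * a3 ^ 4 < 256 * a4 ^ 3 * a0 -> 0 < a4 ->
  0 < a0 - a3 * w ^ 3 + a4 * w ^ 4.
Proof.
  intros Hdisc H4.
  assert (Hsos : 256 * a4 ^ 3 * (a0 - a3 * w ^ 3 + a4 * w ^ 4) =
    (256 * a4 ^ 3 * a0 - 27 * a3 ^ 4) +
    / 3 * ((4 * a4 * w - 3 * a3) ^ 2 * (2 * (4 * a4 * w) ^ 2 + (4 * a4 * w + 3 * a3) ^ 2))).
  { field. }
  assert (0 <= (4 * a4 * w - 3 * a3) ^ 2 * (2 * (4 * a4 * w) ^ 2 + (4 * a4 * w + 3 * a3) ^ 2)).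
  { apply Rmult_le_pos; [apply pow2_ge_0|].
    pose proof (pow2_ge_0 (4 * a4 * w)). pose proof (pow2_ge_0 (4 * a4 * w + 3 * a3)). lra. }
  assert (0 < 256 * a4 ^ 3) by (apply Rmult_lt_0_compat; [lra | now apply pow_lt]).
  apply (Rmult_lt_reg_l (256 * a4 ^ 3)); lra.
Qed.

Ltac pose_powers_nonneg u Hu n :=
  match n with
  | O => idtac
  | S ?m => pose proof (pow_le u n Hu); pose_powers_nonneg u Hu m
  end.

Definition gbdf5_sqnorm_coef3 (u : R) : R :=
  57/10 + 28*u + 1877/45*u^2 + 85/3*u^3 + 88/9*u^4 + 5/3*u^5 + 1/9*u^6.

Definition gbdf5_sqnorm_coef4 (u : R) : R :=
  548/75 + 382/9*u + 2663/30*u^2 + 1703/18*u^3 + 10453/180*u^4 + 385/18*u^5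
  + 14/3*u^6 + 5/9*u^7 + 1/36*u^8.

Lemma sqnorm_gbdf5_a B c :
  sqnorm (gbdf5_a B) c =
  1 + (1 - c) / 6 + 2 * (1 - c) ^ 2 / 45
  - gbdf5_sqnorm_coef3 (B - 1) * (1 - c) ^ 3 + gbdf5_sqnorm_coef4 (B - 1) * (1 - c) ^ 4.
Proof. unfold sqnorm, gbdf5_a, gbdf5_sqnorm_coef3, gbdf5_sqnorm_coef4. simpl. field. Qed.

Lemma gbdf5_sqnorm_coef4_pos u : 0 <= u -> 0 < gbdf5_sqnorm_coef4 u.
Proof. intros Hu. pose_powers_nonneg u Hu constr:(8%nat). unfold gbdf5_sqnorm_coef4. lra. Qed.

(* Expanded in u, 256 k4^3 - 27 k3^4 has only positive coefficients, so [u^k >= 0] suffices. *)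
Lemma gbdf5_sqnorm_discriminant u : 0 <= u ->
  27 * gbdf5_sqnorm_coef3 u ^ 4 < 256 * gbdf5_sqnorm_coef4 u ^ 3.
Proof.
  intros Hu. pose_powers_nonneg u Hu constr:(24%nat).
  unfold gbdf5_sqnorm_coef3, gbdf5_sqnorm_coef4. lra.
Qed.

Lemma sqnorm_gbdf5_a_pos B : 1 <= B -> forall c, -1 <= c <= 1 -> 0 < sqnorm (gbdf5_a B) c.
Proof.
  intros HB c Hc. rewrite sqnorm_gbdf5_a.
  assert (Hdisc : 27 * gbdf5_sqnorm_coef3 (B - 1) ^ 4 < 256 * gbdf5_sqnorm_coef4 (B - 1) ^ 3 * 1).
  { rewrite Rmult_1_r. apply gbdf5_sqnorm_discriminant. lra. }
  pose proof (quartic_pos 1 _ _ (1 - c) Hdisc (gbdf5_sqnorm_coef4_pos (B - 1) ltac:(lra))).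
  pose proof (pow2_ge_0 (1 - c)). lra.
Qed.

Lemma ratio_le_of_bounds l s p q : 0 < q -> q <= s -> l <= p -> 0 <= p -> l / s <= p / q.
Proof.
  intros Hq Hs Hl Hp. apply Rle_trans with (p / s).
  - apply Rmult_le_compat_r; [apply Rlt_le, Rinv_0_lt_compat|]; lra.
  - apply Rmult_le_compat_l; [lra | apply Rinv_le_contravar; lra].
Qed.

Lemma ratio_ge_of_bounds l s p q : 0 <= p -> p <= l -> 0 < s -> s <= q -> p / q <= l / s.
Proof.
  intros Hp Hl Hs Hq. apply Rle_trans with (p / s).
  - apply Rmult_le_compat_l; [lra | apply Rinv_le_contravar; lra].
  - apply Rmult_le_compat_r; [apply Rlt_le, Rinv_0_lt_compat|]; lra.
Qed.

Lemma inv_sqrt_le x m : 0 < m -> m ^ 2 <= x -> / sqrt x <= / m.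
Proof.
  intros Hm Hx. apply Rinv_le_contravar; [exact Hm|].
  rewrite <- (sqrt_pow2 m) by lra. now apply sqrt_le_1_alt.
Qed.

Lemma le_div_of_mul_le l x y : 0 < y -> l * y <= x -> l <= x / y.
Proof.
  intros Hy Hle. apply Rmult_le_reg_r with y; [exact Hy|].
  unfold Rdiv. rewrite Rmult_assoc, Rinv_l, Rmult_1_r by lra. exact Hle.
Qed.

Lemma div_le_of_le_mul x y m : 0 < y -> x <= m * y -> x / y <= m.
Proof.
  intros Hy Hle. apply Rmult_le_reg_r with y; [exact Hy|].
  unfold Rdiv. rewrite Rmult_assoc, Rinv_l, Rmult_1_r by lra. exact Hle.
Qed.

Lemma sqrt_div_le x y m : 0 <= x -> 0 < y -> 0 <= m -> x <= m ^ 2 * y -> sqrt x / sqrt y <= m.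
Proof.
  intros Hx Hy Hm Hle. rewrite <- sqrt_div, <- (sqrt_pow2 m) by assumption.
  now apply sqrt_le_1_alt, div_le_of_le_mul.
Qed.

Lemma gbdf5_extrema_exist B : 1 <= B ->
  exists sF sE lI, IsSigmaF B sF /\ IsSigmaE B sE /\ IsLambdaI B lI.
Proof.
  intros HB. pose proof (sqnorm_gbdf5_a_pos B HB) as a_pos.
  destruct (Cmod_inv_max_exists _ a_pos) as [sF HF].
  destruct (Cmod_div_max_exists _ a_pos (gbdf5_c B)) as [sE HE].
  destruct (Re_div_min_exists _ a_pos (gbdf5_b B)) as [lI HL].
  now exists sF, sE, lI.
Qed.

Lemma sqnorm_gbdf5_a_at_1 B : sqnorm (gbdf5_a B) 1 = 1.
Proof. unfold sqnorm, gbdf5_a. simpl. field. Qed.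

Lemma sqnorm_gbdf5_a_at_m1 B :
  sqnorm (gbdf5_a B) (-1) = ((10*B^4+60*B^3+90*B^2-32) / 15) ^ 2.
Proof. unfold sqnorm, gbdf5_a. simpl. field. Qed.

Lemma sqnorm_gbdf5_c_at_m1 B :
  sqnorm (gbdf5_c B) (-1) = ((2*B^4+16*B^3+40*B^2+32*B+3) / 3) ^ 2.
Proof. unfold sqnorm, gbdf5_c. simpl. field. Qed.

Lemma redot_gbdf5_at_m1 B :
  redot (gbdf5_b B) (gbdf5_a B) (-1) =
  (2*B^4+8*B^3+4*B^2-8*B-3) / 3 * ((10*B^4+60*B^3+90*B^2-32) / 15).
Proof. unfold redot, gbdf5_a, gbdf5_b. simpl. field. Qed.

Lemma gbdf5_lower_bounds B sF sE lI : 1 <= B ->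
  IsSigmaF B sF -> IsSigmaE B sE -> IsLambdaI B lI ->
  1 <= sF /\
  5*(2*B^4+16*B^3+40*B^2+32*B+3) / (10*B^4+60*B^3+90*B^2-32) <= sE /\
  lI <= 5*(2*B^4+8*B^3+4*B^2-8*B-3) / (10*B^4+60*B^3+90*B^2-32) /\
  lI / sE <= (2*B^4+8*B^3+4*B^2-8*B-3) / (2*B^4+16*B^3+40*B^2+32*B+3).
Proof.
  intros HB. pose proof (sqnorm_gbdf5_a_pos B HB) as a_pos.
  unfold IsSigmaF, IsSigmaE, IsLambdaI.
  rewrite IsMaxOnCircle_Cmod_inv, IsMaxOnCircle_Cmod_div, IsMinOnCircle_Re_div by exact a_pos.
  intros [_ HF] [_ HE] [_ HL].
  specialize (HF 1 ltac:(lra)). specialize (HE (-1) ltac:(lra)). specialize (HL (-1) ltac:(lra)).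
  rewrite sqnorm_gbdf5_a_at_1, sqrt_1, Rinv_1 in HF.
  rewrite sqnorm_gbdf5_a_at_m1, sqnorm_gbdf5_c_at_m1 in HE.
  rewrite sqnorm_gbdf5_a_at_m1, redot_gbdf5_at_m1 in HL.
  set (Dn := 10*B^4+60*B^3+90*B^2-32) in *.
  set (Nc := 2*B^4+16*B^3+40*B^2+32*B+3) in *.
  set (Nb := 2*B^4+8*B^3+4*B^2-8*B-3) in *.
  assert (HB2 : 1 <= B^2) by nra. assert (HB3 : 1 <= B^3) by nra. assert (HB4 : 1 <= B^4) by nra.
  assert (HDn : 0 < Dn) by (unfold Dn; lra).
  assert (HNc : 0 < Nc) by (unfold Nc; lra).
  assert (HNb : 0 <= Nb) by (unfold Nb; nra).
  rewrite !sqrt_pow2 in HE by lra.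
  replace (Nc / 3 / (Dn / 15)) with (5 * Nc / Dn) in HE by (field; lra).
  replace (Nb / 3 * (Dn / 15) / (Dn / 15) ^ 2) with (5 * Nb / Dn) in HL by (field; lra).
  repeat split; try assumption.
  replace (Nb / Nc) with (5 * Nb / Dn / (5 * Nc / Dn)) by (field; lra).
  apply ratio_le_of_bounds; try assumption.
  - apply Rdiv_lt_0_compat; lra.
  - apply Rdiv_le_0_compat; lra.
Qed.

Lemma sqnorm_gbdf5_a20_lower c : -1 <= c <= 1 -> (200/399) ^ 2 < sqnorm (gbdf5_a 20) c.
Proof.
  intros Hc. rewrite sqnorm_gbdf5_a. replace (20 - 1) with 19 by lra.
  assert (Hdisc : 27 * gbdf5_sqnorm_coef3 19 ^ 4 < 256 * gbdf5_sqnorm_coef4 19 ^ 3 * (1 - (200/399) ^ 2)).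
  { unfold gbdf5_sqnorm_coef3, gbdf5_sqnorm_coef4. lra. }
  pose proof (quartic_pos _ _ _ (1 - c) Hdisc (gbdf5_sqnorm_coef4_pos 19 ltac:(lra))).
  pose proof (pow2_ge_0 (1 - c)). lra.
Qed.

Lemma sqnorm_gbdf5_c20_upper c : -1 <= c <= 1 ->
  sqnorm (gbdf5_c 20) c < (2501825/2115968) ^ 2 * sqnorm (gbdf5_a 20) c.
Proof.
  intros Hc.
  assert (Hexp : (2501825/2115968) ^ 2 * sqnorm (gbdf5_a 20) c - sqnorm (gbdf5_c 20) c =
    1781807753601/4477320577024 + 6259128330625/26863923462144 * (1 - c)
    + 1251825666125/20147942596608 * (1 - c) ^ 2
    - 24032029900000200805/8954641154048 * (1 - c) ^ 3
    + 269457323953042531695/1119330144256 * (1 - c) ^ 4).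
  { unfold sqnorm, gbdf5_a, gbdf5_c. simpl. field. }
  assert (Hdisc : 27 * (24032029900000200805/8954641154048) ^ 4 <
    256 * (269457323953042531695/1119330144256) ^ 3 * (1781807753601/4477320577024)) by lra.
  pose proof (quartic_pos _ _ _ (1 - c) Hdisc ltac:(lra)).
  pose proof (pow2_ge_0 (1 - c)). lra.
Qed.

Lemma redot_gbdf5_b20_lower c : -1 <= c <= 1 ->
  1769085/2115968 * sqnorm (gbdf5_a 20) c < redot (gbdf5_b 20) (gbdf5_a 20) c.
Proof.
  intros Hc. set (w := 1 - c).
  assert (Hexp : redot (gbdf5_b 20) (gbdf5_a 20) c - 1769085/2115968 * sqnorm (gbdf5_a 20) c =
    346883/2115968 - 3885053/12695808 * w - 1118687/15869760 * w ^ 2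
    - 66772003256257/63479040 * w ^ 3 + 741531983094211/7934880 * w ^ 4).
  { unfold w, sqnorm, redot, gbdf5_a, gbdf5_b. simpl. field. }
  apply Rlt_0_minus. rewrite Hexp.
  (* The negative linear and quadratic terms cost less than the discriminant slack while
     w <= 1/64; beyond that point the quartic term dominates. *)
  destruct (Rle_lt_dec w (1/64)) as [Hsmall | Hlarge].
  - assert (Hdisc : 27 * (66772003256257/63479040) ^ 4 <
      256 * (741531983094211/7934880) ^ 3 * (346883/2115968 - 3885053/12695808 / 64 - 1118687/15869760 / 64 ^ 2)) by lra.
    pose proof (quartic_pos _ _ _ w Hdisc ltac:(lra)).
    assert (0 <= w) by (unfold w; lra). nra.
  - nra.
Qed.

Lemma gbdf5_20_upper_bounds sF sE lI :
  IsSigmaF 20 sF -> IsSigmaE 20 sE -> IsLambdaI 20 lI ->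
  sF <= 399/200 /\ sE <= 2501825/2115968 /\ 1769085/2115968 <= lI.
Proof.
  pose proof (sqnorm_gbdf5_a_pos 20 ltac:(lra)) as a_pos.
  unfold IsSigmaF, IsSigmaE, IsLambdaI.
  rewrite IsMaxOnCircle_Cmod_inv, IsMaxOnCircle_Cmod_div, IsMinOnCircle_Re_div by exact a_pos.
  intros [[cF [HcF <-]] _] [[cE [HcE <-]] _] [[cL [HcL <-]] _].
  repeat split.
  - replace (399/200) with (/ (200/399)) by field.
    apply inv_sqrt_le; [lra|]. apply Rlt_le, sqnorm_gbdf5_a20_lower, HcF.
  - apply sqrt_div_le; [apply sqnorm_nonneg, HcE | apply a_pos, HcE | lra |].
    apply Rlt_le, sqnorm_gbdf5_c20_upper, HcE.
  - apply le_div_of_mul_le; [apply a_pos, HcL|].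
    apply Rlt_le, redot_gbdf5_b20_lower, HcL.
Qed.

Theorem mainTheorem9 :
  (forall B : R, 1 <= B ->
     exists sF sE lI : R,
       IsSigmaF B sF /\ IsSigmaE B sE /\ IsLambdaI B lI /\
       1 <= sF /\
       5*(2*B^4+16*B^3+40*B^2+32*B+3) / (10*B^4+60*B^3+90*B^2-32) <= sE /\
       lI <= 5*(2*B^4+8*B^3+4*B^2-8*B-3) / (10*B^4+60*B^3+90*B^2-32) /\
       lI / sE <= (2*B^4+8*B^3+4*B^2-8*B-3) / (2*B^4+16*B^3+40*B^2+32*B+3)) /\
  (exists sF sE lI : R,
     IsSigmaF 20 sF /\ IsSigmaE 20 sE /\ IsLambdaI 20 lI /\
     sF <= 399/200 /\
     sE <= 2501825/2115968 /\
     1769085/2115968 <= lI /\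
     353817/500365 <= lI / sE).
Proof.
  split.
  - intros B HB.
    destruct (gbdf5_extrema_exist B HB) as (sF & sE & lI & HF & HE & HL).
    exists sF, sE, lI. do 3 (split; [assumption|]).
    now apply gbdf5_lower_bounds.
  - destruct (gbdf5_extrema_exist 20 ltac:(lra)) as (sF & sE & lI & HF & HE & HL).
    destruct (gbdf5_lower_bounds 20 sF sE lI ltac:(lra) HF HE HL) as (_ & HsE_low & _).
    destruct (gbdf5_20_upper_bounds sF sE lI HF HE HL) as (HsF & HsE & HlI).
    exists sF, sE, lI. do 6 (split; [assumption|]).
    replace (353817/500365) with ((1769085/2115968) / (2501825/2115968)) by field.
    apply ratio_ge_of_bounds; try assumption; lra.
Qed.
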